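(* Let $X$ be a $k$-regular distance regular graph of diameter $d$, and let $Y_i$ be the $i$-th distance digraph of $\mathrm{LD}(X)$. Then: (i) the matrices $S(Y_0),S(Y_1),\dots,S(Y_{d+1})$ are linearly dependent; (ii) for all $i,j\in\{0,1,\dots,d+1\}$, $S(Y_i)S(Y_j)=S(Y_j)S(Y_i)$.
   Context: $X$ is a connected distance regular graph (for vertices $u,v$ at distance $\ell$, the number of vertices at distance $i$ from $u$ and $j$ from $v$ depends only on $i,j,\ell$). Each edge $\{a,b\}$ of $X$ is replaced by arcs $(a,b)$ and $(b,a)$; the line digraph $\mathrm{LD}(X)$ has the arcs as vertices, with an arc from $(a,b)$ to $(c,d)$ iff $b=c$. For a digraph $Y$, its $i$-th distance digraph $Y_i$ has the same vertex set, with $a$ adjacent to $b$ iff the directed distance from $a$ to $b$ in $Y$ is $i$. For a digraph $Z$ with $01$-adjacency matrix $A(Z)$, its skew-adjacency matrix is $S(Z)=A(Z)-A(Z)^T$. *)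

From HB Require Import structures.
From mathcomp Require Import all_boot all_order all_algebra.
Set Implicit Arguments. Unset Strict Implicit. Unset Printing Implicit Defensive.
Import GRing.Theory Num.Theory.
Local Open Scope ring_scope.

Fixpoint walkn (V : finType) (r : rel V) (n : nat) (x y : V) : bool :=
  match n with
  | 0 => x == y
  | n'.+1 => [exists z, r x z && walkn r n' z y]
  end.

Definition dist_is (V : finType) (r : rel V) (i : nat) (x y : V) : bool :=
  walkn r i x y && [forall j : 'I_i, ~~ walkn r j x y].

Definition simple_graph (T : finType) (e : rel T) : Prop :=
  symmetric e /\ irreflexive e.

Definition connected_graph (T : finType) (e : rel T) : Prop :=
  forall u v, exists n, walkn e n u v.

Definition regular_graph (T : finType) (e : rel T) (k : nat) : Prop :=
  forall v, #|[set w | e v w]| = k.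

Definition diameter_is (T : finType) (e : rel T) (d : nat) : Prop :=
  (exists u v, dist_is e d u v) /\
  (forall u v, exists2 i, (i <= d)%N & dist_is e i u v).

Definition distance_regular (T : finType) (e : rel T) : Prop :=
  simple_graph e /\ connected_graph e /\
  forall (l i j : nat) (u v u' v' : T),
    dist_is e l u v -> dist_is e l u' v' ->
    #|[set w | dist_is e i u w && dist_is e j v w]| =
    #|[set w | dist_is e i u' w && dist_is e j v' w]|.

Definition arc (T : finType) (e : rel T) := {x : T * T | e x.1 x.2}.

Definition line_digraph (T : finType) (e : rel T) : rel (arc e) :=
  fun p q => (val p).2 == (val q).1.

Definition distance_digraph (V : finType) (r : rel V) (i : nat) : rel V :=
  fun x y => dist_is r i x y.

Definition adjacency_mx (R : numFieldType) (V : finType) (r : rel V) : 'M[R]_#|V| :=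
  \matrix_(p, q) (r (enum_val p) (enum_val q))%:R.

Definition skew_adjacency_mx (R : numFieldType) (V : finType) (r : rel V) : 'M[R]_#|V| :=
  adjacency_mx R r - (adjacency_mx R r)^T.

From Pilot Require Import Defs.
From HB Require Import structures.
From mathcomp Require Import all_boot all_order all_algebra.
Import GRing.Theory Num.Theory.
Set Implicit Arguments. Unset Strict Implicit.
Local Open Scope ring_scope.

(* Let H and T be the arcs-by-vertices incidence matrices recording the head
   and the tail of each arc, and A_i the i-th distance matrix of X.  Since a
   shortest walk in LD(X) between distinct arcs p, q is a shortest walk in X
   from the head of p to the tail of q, followed by the arc q, we get
       S(Y_0) = 0   and   S(Y_{i+1}) = H A_i T^T - T A_i H^T.
   (i)  As A_0 + ... + A_d = J for X of diameter d, the sum of all S(Y_i)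
        is H J T^T - T J H^T = J - J = 0: the coefficients 1,...,1 give a
        nontrivial linear dependence.
   (ii) For X simple and k-regular, T^T H = H^T T = A_1 and T^T T = H^T H = kI;
        expanding (H A T^T - T A H^T)(H B T^T - T B H^T) with these identities
        shows it is symmetric in A, B as soon as A, B commute and
        A A_1 B = B A_1 A, which holds for the commuting distance matrices of a
        distance-regular graph. *)

Section FunMatrices.
Variable R : comPzRingType.

Definition fun_mx (V W : finType) (f : V -> W -> R) : 'M[R]_(#|V|, #|W|) :=
  \matrix_(p, q) f (enum_val p) (enum_val q).

Definition graph_mx (V W : finType) (h : V -> W) : 'M[R]_(#|V|, #|W|) :=
  fun_mx (fun x y => (h x == y)%:R).

Lemma eq_fun_mx (V W : finType) (f g : V -> W -> R) : f =2 g -> fun_mx f = fun_mx g.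
Proof. by move=> fg; apply/matrixP => p q; rewrite !mxE fg. Qed.

Lemma fun_mxT (V W : finType) (f : V -> W -> R) : (fun_mx f)^T = fun_mx (fun y x => f x y).
Proof. by apply/matrixP => p q; rewrite !mxE. Qed.

Lemma fun_mxM (U V W : finType) (f : U -> V -> R) (g : V -> W -> R) :
  fun_mx f *m fun_mx g = fun_mx (fun x z => \sum_y f x y * g y z).
Proof.
apply/matrixP => p q; rewrite !mxE.
rewrite (big_enum_val (fun y => f (enum_val p) y * g y (enum_val q))) /=.
by apply: eq_bigr => i _; rewrite !mxE.
Qed.

Lemma fun_mx_sum (I : finType) (V W : finType) (f : I -> V -> W -> R) :
  \sum_i fun_mx (f i) = fun_mx (fun x y => \sum_i f i x y).
Proof. by apply/matrixP => p q; rewrite !mxE summxE; apply: eq_bigr => i _; rewrite mxE. Qed.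

Lemma scalar_fun_mx (V : finType) (a : R) : a%:M = fun_mx (fun u v : V => a *+ (u == v)).
Proof. by apply/matrixP => p q; rewrite !mxE (inj_eq enum_val_inj). Qed.

Lemma sum_delta (V : finType) (a : V) (F : V -> R) : \sum_v (a == v)%:R * F v = F a.
Proof.
rewrite (bigD1 a) //= eqxx mul1r big1 ?addr0 // => v /negbTE.
by rewrite eq_sym => ->; rewrite mul0r.
Qed.

Lemma graph_mx_sandwich (U U' V W : finType) (a : V -> U) (b : W -> U') (f : U -> U' -> R) :
  graph_mx a *m fun_mx f *m (graph_mx b)^T = fun_mx (fun x y => f (a x) (b y)).
Proof.
rewrite fun_mxT !fun_mxM; apply: eq_fun_mx => x y /=.
under eq_bigr => u _ do rewrite sum_delta mulrC.
exact: sum_delta.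
Qed.

Lemma graph_mx_tmul (U U' V : finType) (a : V -> U) (b : V -> U') :
  (graph_mx a)^T *m graph_mx b =
  fun_mx (fun u v => #|[set x | (a x == u) && (b x == v)]|%:R).
Proof.
rewrite fun_mxT fun_mxM; apply: eq_fun_mx => u v /=.
rewrite -sum1_card natr_sum [RHS]big_mkcond; apply: eq_bigr => x _.
by rewrite inE -natrM mulnb; case: (_ && _).
Qed.

Lemma graph_mx_gram (U V : finType) (a : V -> U) :
  (graph_mx a)^T *m graph_mx a = fun_mx (fun u v => #|[set x | a x == u]|%:R *+ (u == v)).
Proof.
rewrite graph_mx_tmul; apply: eq_fun_mx => u v.
have [->|neq_uv] := eqVneq u v; first by under eq_finset => x do rewrite andbb.
rewrite mulr0n (_ : [set x | _] = set0) ?cards0 //; apply/setP => x; rewrite !inE.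
by apply/negP => /andP[/eqP axu /eqP axv]; rewrite -axu axv eqxx in neq_uv.
Qed.

End FunMatrices.

Section SkewSandwich.
Variables (R : comPzRingType) (n m : nat) (X Y : 'M[R]_(n, m)) (C : 'M[R]_m) (k : R).
Hypotheses (YX : Y^T *m X = C) (XY : X^T *m Y = C).
Hypotheses (XX : X^T *m X = k%:M) (YY : Y^T *m Y = k%:M).

(* Under the four Gram identities above, the products of skew matrices
   X A Y^T - Y A X^T expand into terms where A and B only meet through A C B
   and A B; this makes commutation of A and B propagate to them. *)
Definition skew_sandwich (A : 'M[R]_m) : 'M[R]_n := X *m A *m Y^T - Y *m A *m X^T.

Lemma skew_sandwich_mul A B :
  skew_sandwich A *m skew_sandwich B =
  X *m (A *m C *m B) *m Y^T - k *: (X *m (A *m B) *m X^T)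
  - k *: (Y *m (A *m B) *m Y^T) + Y *m (A *m C *m B) *m X^T.
Proof.
have mid (P Q M : 'M[R]_(n, m)) (Z : 'M[R]_(m, n)) :
    P *m A *m Q^T *m (M *m B *m Z) = P *m (A *m (Q^T *m M) *m B) *m Z.
  by rewrite !mulmxA.
rewrite mulmxBl !mulmxBr !mid YX XY XX YY mul_mx_scalar.
by rewrite -!scalemxAl -!scalemxAr -!scalemxAl opprB addrA addrAC.
Qed.

Lemma skew_sandwich_comm A B :
  A *m B = B *m A -> A *m C *m B = B *m C *m A ->
  skew_sandwich A *m skew_sandwich B = skew_sandwich B *m skew_sandwich A.
Proof. by move=> AB ACB; rewrite !skew_sandwich_mul AB ACB. Qed.

End SkewSandwich.

Section WalksAndDistances.
Variables (V : finType) (r : rel V).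

Lemma distP i x y :
  reflect (walkn r i x y /\ forall j, (j < i)%N -> ~~ walkn r j x y) (dist_is r i x y).
Proof.
apply: (iffP andP) => [[wi /forallP short]|[wi short]]; split => //.
  by move=> j lt_ji; exact: (short (Ordinal lt_ji)).
by apply/forallP => j; apply: short.
Qed.

Lemma dist_uniq i j x y : dist_is r i x y -> dist_is r j x y -> i = j.
Proof.
move=> /distP[wi si] /distP[wj sj].
by case: (ltngtP i j) => // [/sj|/si]; rewrite ?wi ?wj.
Qed.

Lemma dist0 x y : dist_is r 0 x y = (x == y).
Proof. by apply/distP/idP => [[]|]. Qed.

Lemma dist1 x y : irreflexive r -> dist_is r 1 x y = r x y.
Proof.
move=> irr; apply/distP/idP => [[/existsP[z /andP[rxz /eqP <-]]] //|rxy].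
split; first by apply/existsP; exists y; rewrite rxy eqxx.
case=> // _; apply/negP => /eqP exy; by rewrite exy irr in rxy.
Qed.

(* The defining recursion of walkn, as a rewrite rule that keeps walkn folded. *)
Lemma walkS n x y : walkn r n.+1 x y = [exists z, r x z && walkn r n z y].
Proof. by []. Qed.

Lemma walkSr n x y : walkn r n.+1 x y = [exists z, walkn r n x z && r z y].
Proof.
elim: n x => [|n IH] x.
  apply/existsP/existsP => [[z /andP[rxz /eqP <-]]|[z /andP[/eqP <- rxy]]].
    by exists x; rewrite /= eqxx.
  by exists y; rewrite rxy eqxx.
rewrite walkS.
apply/existsP/existsP => [[z /andP[rxz]]|[w /andP[/existsP[z /andP[rxz wzw]] rwy]]].
  rewrite IH => /existsP[w /andP[wzw rwy]].
  by exists w; rewrite rwy andbT; apply/existsP; exists z; rewrite rxz.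
by exists z; rewrite rxz IH; apply/existsP; exists w; apply/andP.
Qed.

Lemma walkn_dist n x y : walkn r n x y -> exists l, dist_is r l x y.
Proof.
move=> wxy; have reach : exists n, walkn r n x y by exists n.
case: (ex_minnP reach) => l wl l_min; exists l; apply/distP; split=> // j lt_jl.
by apply/negP => /l_min; rewrite leqNgt lt_jl.
Qed.

Hypothesis r_sym : symmetric r.

Lemma walkn_sym n x y : walkn r n x y = walkn r n y x.
Proof.
elim: n x y => [|n IH] x y; first by rewrite /= eq_sym.
rewrite walkSr walkS; apply/existsP/existsP => [][z /andP[h1 h2]];
  by exists z; rewrite r_sym IH h1 h2.
Qed.

Lemma dist_sym i x y : dist_is r i x y = dist_is r i y x.
Proof. by rewrite /dist_is walkn_sym; congr (_ && _); apply: eq_forallb => j; rewrite walkn_sym. Qed.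

End WalksAndDistances.

Section LineDigraph.
Variables (T : finType) (e : rel T).
Local Notation LD := (@line_digraph T e).

Lemma walkn_line_digraph n (p q : Defs.arc e) :
  walkn LD n.+1 p q = walkn e n (val p).2 (val q).1.
Proof.
elim: n p => [|n IH] p.
  rewrite walkS; apply/existsP/idP => [[z /andP[/eqP pz /eqP <-]]|epq].
    by rewrite /= pz.
  by exists q; rewrite /line_digraph /= eqxx andbT.
rewrite walkS [RHS]walkS.
apply/existsP/existsP => [[z /andP[/eqP pz wzq]]|[y /andP[epy wyq]]].
  by exists (val z).2; rewrite -IH wzq andbT pz; case: z {pz wzq} => [[a b] /= eab].
by exists (exist _ ((val p).2, y) epy); rewrite IH /line_digraph eqxx.
Qed.

Lemma dist_line_digraph i (p q : Defs.arc e) :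
  dist_is LD i.+1 p q = dist_is e i (val p).2 (val q).1 && (p != q).
Proof.
apply/distP/andP => [[wpq short]|[/distP[wpq short] neq_pq]].
  split; last by have := short 0%N isT.
  apply/distP; split; first by rewrite -walkn_line_digraph.
  by move=> j lt_ji; rewrite -walkn_line_digraph; apply: short.
split; first by rewrite walkn_line_digraph.
by case=> [//|j lt_ji]; rewrite walkn_line_digraph; apply: short.
Qed.

Lemma card_arcs_between u v :
  #|[set p : Defs.arc e | ((val p).1 == u) && ((val p).2 == v)]| = e u v.
Proof.
case euv: (e u v) => /=.
  rewrite -(cards1 (exist _ (u, v) euv : Defs.arc e)); apply: eq_card => p.
  by rewrite !inE -val_eqE -xpair_eqE -surjective_pairing.
apply/eqP; rewrite cards_eq0; apply/eqP/setP => p; rewrite !inE.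
apply/negbTE/andP => -[/eqP pu /eqP pv].
by have := valP p; rewrite [val p]surjective_pairing pu pv euv.
Qed.

Lemma card_arcs_from u :
  #|[set p : Defs.arc e | (val p).1 == u]| = #|[set w | e u w]|.
Proof.
have -> : [set w | e u w] = (fun p : Defs.arc e => (val p).2) @: [set p | (val p).1 == u].
  apply/setP => w; rewrite inE; apply/idP/imsetP => [euw|[p]].
    by exists (exist _ (u, w) euw); rewrite // inE.
  by rewrite inE => /eqP <- ->; apply: (valP p).
apply/esym/card_in_imset => p q; rewrite !inE => /eqP pu /eqP qu pq.
by apply: val_inj; rewrite [val p]surjective_pairing [val q]surjective_pairing pu qu pq.
Qed.

Lemma card_arcs_to u : symmetric e ->
  #|[set p : Defs.arc e | (val p).2 == u]| = #|[set w | e u w]|.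
Proof.
move=> e_sym.
have -> : [set w | e u w] = (fun p : Defs.arc e => (val p).1) @: [set p | (val p).2 == u].
  apply/setP => w; rewrite inE; apply/idP/imsetP => [euw|[p]].
    by exists (exist _ (w, u) (etrans (esym (e_sym u w)) euw)); rewrite // inE.
  by rewrite inE => /eqP <- ->; rewrite e_sym; apply: (valP p).
apply/esym/card_in_imset => p q; rewrite !inE => /eqP pu /eqP qu pq.
by apply: val_inj; rewrite [val p]surjective_pairing [val q]surjective_pairing pu qu pq.
Qed.

End LineDigraph.

Section IncidenceFactorisation.
Variables (R : numFieldType) (T : finType) (e : rel T).
Hypothesis e_simple : simple_graph e.
Local Notation LD := (@line_digraph T e).

Local Notation S i := (skew_adjacency_mx R (distance_digraph LD i)).

Definition head_mx : 'M[R]_(_, _) := graph_mx R (fun p : Defs.arc e => (val p).2).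
Definition tail_mx : 'M[R]_(_, _) := graph_mx R (fun p : Defs.arc e => (val p).1).
Definition dist_mx (i : nat) : 'M[R]_#|T| := fun_mx (fun u v => (dist_is e i u v)%:R).

(* Y_0 is the identity relation, whose skew-adjacency matrix vanishes. *)
Lemma skew_line_dist0 : S 0 = 0.
Proof. by apply/matrixP => p q; rewrite !mxE /distance_digraph !dist0 eq_sym subrr. Qed.

Lemma skew_line_dist_succ i : S i.+1 = skew_sandwich head_mx tail_mx (dist_mx i).
Proof.
have [e_sym _] := e_simple.
rewrite /skew_sandwich !graph_mx_sandwich; apply/matrixP => p0 q0; rewrite !mxE /distance_digraph.
move: (enum_val p0) (enum_val q0) => p q {p0 q0}.
rewrite !dist_line_digraph [dist_is e i (val q).2 _]dist_sym //.
have [->|_] := eqVneq p q; last by rewrite !andbT.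
by rewrite /= !andbF [in RHS]dist_sym // !subrr.
Qed.

Lemma tail_head : tail_mx^T *m head_mx = dist_mx 1.
Proof.
have [_ e_irr] := e_simple.
rewrite graph_mx_tmul; apply: eq_fun_mx => u v.
by rewrite card_arcs_between dist1.
Qed.

Lemma head_tail : head_mx^T *m tail_mx = dist_mx 1.
Proof.
have [e_sym e_irr] := e_simple.
rewrite graph_mx_tmul; apply: eq_fun_mx => u v.
by under eq_finset => p do rewrite andbC; rewrite card_arcs_between dist1 // e_sym.
Qed.

Variable k : nat.
Hypothesis e_regular : regular_graph e k.

(* In a k-regular graph every vertex is the tail, and the head, of k arcs. *)
Lemma tail_gram : tail_mx^T *m tail_mx = k%:R%:M.
Proof.
rewrite graph_mx_gram scalar_fun_mx; apply: eq_fun_mx => u v.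
by rewrite card_arcs_from e_regular.
Qed.

Lemma head_gram : head_mx^T *m head_mx = k%:R%:M.
Proof.
have [e_sym _] := e_simple.
rewrite graph_mx_gram scalar_fun_mx; apply: eq_fun_mx => u v.
by rewrite card_arcs_to // e_regular.
Qed.

End IncidenceFactorisation.

Section DistanceMatrices.
Variables (R : numFieldType) (T : finType) (e : rel T).

(* In a distance-regular graph the distance matrices commute: both entries of
   A_i A_j and A_j A_i at (u,v) count the same intersection number p^l_{ij}. *)
Lemma dist_mx_comm i j : distance_regular e ->
  dist_mx R e i *m dist_mx R e j = dist_mx R e j *m dist_mx R e i.
Proof.
move=> [[e_sym _] [e_conn e_dr]]; rewrite !fun_mxM; apply: eq_fun_mx => u v.
have count a b : \sum_w (dist_is e a u w)%:R * (dist_is e b w v)%:R =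
    #|[set w | dist_is e a u w && dist_is e b v w]|%:R :> R.
  rewrite -sum1_card natr_sum [RHS]big_mkcond; apply: eq_bigr => w _.
  by rewrite inE -natrM mulnb (dist_sym e_sym b w v); case: (_ && _).
have [n wuv] := e_conn u v; have [l duv] := walkn_dist wuv.
have dvu : dist_is e l v u by rewrite dist_sym.
rewrite !count (e_dr l i j u v v u duv dvu); congr (_%:R); apply: eq_card => w.
by rewrite !inE andbC.
Qed.

(* In a graph of diameter d every pair of vertices is at exactly one distance
   i <= d, so A_0 + ... + A_d is the all-ones matrix J. *)
Lemma sum_dist_mx d : diameter_is e d ->
  \sum_(i < d.+1) dist_mx R e i = fun_mx (fun _ _ => 1).
Proof.
move=> [_ diam]; rewrite fun_mx_sum; apply: eq_fun_mx => u v.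
have [l le_ld duv] := diam u v.
rewrite (bigD1 (Ordinal (le_ld : l < d.+1)%N)) //= duv big1 ?addr0 // => i ne_il.
case dist_i: (dist_is e i u v) => //; move: ne_il.
by rewrite -val_eqE /= (dist_uniq dist_i duv) eqxx.
Qed.

End DistanceMatrices.

Section SkewDistanceMatrices.
Variables (R : numFieldType) (T : finType) (e : rel T).
Hypothesis e_simple : simple_graph e.
Local Notation S i := (skew_adjacency_mx R (distance_digraph (@line_digraph T e) i)).

(* Part (i): S(Y_0) + ... + S(Y_{d+1}) = H J T^T - T J H^T = J - J = 0. *)
Lemma sum_skew_line_dist d : diameter_is e d -> \sum_(i < d.+2) S i = 0.
Proof.
move=> e_diam; rewrite big_ord_recl skew_line_dist0 add0r.
under eq_bigr => i _ do rewrite lift0 (skew_line_dist_succ R e_simple).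
rewrite /skew_sandwich sumrB -!mulmx_suml -!mulmx_sumr (sum_dist_mx R e_diam).
by rewrite !graph_mx_sandwich subrr.
Qed.

Lemma skew_line_dist_comm k i j :
  distance_regular e -> regular_graph e k -> S i *m S j = S j *m S i.
Proof.
move=> e_dr e_reg.
have A_comm a b : dist_mx R e a *m dist_mx R e b = dist_mx R e b *m dist_mx R e a.
  exact: dist_mx_comm.
case: i j => [|i] [|j]; rewrite ?skew_line_dist0 ?mul0mx ?mulmx0 //.
rewrite !(skew_line_dist_succ R e_simple).
apply: (skew_sandwich_comm (tail_head R e_simple) (head_tail R e_simple)
  (head_gram R e_simple e_reg) (tail_gram R e_reg)) => //.
by rewrite (A_comm i 1%N) -!mulmxA (A_comm i j) !mulmxA (A_comm j 1%N).
Qed.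

End SkewDistanceMatrices.

Unset Implicit Arguments.

Theorem corollary4p4 (R : numFieldType) (T : finType) (e : rel T) (k d : nat) :
  distance_regular e -> regular_graph e k -> diameter_is e d ->
  let S := fun i : nat =>
    skew_adjacency_mx R (distance_digraph (@line_digraph T e) i) in
  (exists c : 'I_(d.+2) -> R, (exists i, c i != 0) /\
     \sum_(i < d.+2) c i *: S (nat_of_ord i) = 0) /\
  (forall i j : nat, (i <= d.+1)%N -> (j <= d.+1)%N -> S i *m S j = S j *m S i).
Proof.
move=> e_dr e_reg e_diam S; have [e_simple _] := e_dr.
split=> [|i j _ _]; last exact: skew_line_dist_comm e_dr e_reg.
exists (fun _ => 1); split; first by exists ord0; rewrite oner_neq0.
under eq_bigr do rewrite scale1r.
exact: sum_skew_line_dist.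
Qed.
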